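(* Let $x_1 \geq x_2 \geq \dots \geq x_m$ be the side lengths of a finite set of squares with $x_1 < \frac{1}{2}$. If the total area $\sum_i x_i^2$ is at most $\frac{1}{2} + 2\left(x_1 - \frac{1}{2}\right)^2$, then \textsc{Shelf Packing} packs all of these squares into a unit square.
   Context: \textsc{Shelf Packing} (of Moon and Moser) into an axis-parallel rectangular container processes the squares in order of non-increasing side length and places them axis-parallel. The container is filled by horizontal ''shelves'' stacked from the bottom upward. A shelf is opened by the first square placed in it, whose side length determines the shelf's height; the shelf's bottom is the top of the previous shelf (or the container's bottom for the first shelf). Subsequent squares are placed next to each other along the bottom of the current shelf, from left to right. When the next square no longer fits into the remaining width of the current shelf, a new shelf is opened on top of the current one, starting with that square. \textsc{Shelf Packing} succeeds if all squares are placed inside the container, and fails if some square would have to be placed in a shelf exceeding the container's height. *)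

From mathcomp Require Import all_boot all_order all_algebra.
Set Implicit Arguments. Unset Strict Implicit. Unset Printing Implicit Defensive.
Import Order.TTheory GRing.Theory Num.Theory.
Local Open Scope ring_scope.

Section Shelf.
Variable R : realFieldType.

(* State: yb = bottom of the current shelf, h = height of the current shelf
   (side of the square that opened it), u = width already used in it.
   Returns the lower-left corners of the placed squares, in order. *)
Fixpoint shelf_aux (W yb h u : R) (s : seq R) : seq (R * R) :=
  match s with
  | [::] => [::]
  | x :: s' =>
      if u + x <= W then (u, yb) :: shelf_aux W yb h (u + x) s'
      else (0, yb + h) :: shelf_aux W (yb + h) x x s'
  end.

Definition shelf_positions (W : R) (s : seq R) : seq (R * R) :=
  match s with
  | [::] => [::]
  | x :: s' => (0, 0) :: shelf_aux W 0 x x s'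
  end.

Definition shelf_packing_succeeds (W H : R) (s : seq R) : bool :=
  all (fun pq => let: (p, x) := pq in
                 [&& 0 <= p.1, p.1 + x <= W, 0 <= p.2 & p.2 + x <= H])
      (zip (shelf_positions W s) s).

End Shelf.

From mathcomp Require Import all_boot all_order all_algebra.
From mathcomp Require Import lra.
Import Order.TTheory GRing.Theory Num.Theory.
Local Open Scope ring_scope.

(* Let x1 be the largest side and W the container width.  Every closed shelf
   except the first has height at most the side of each square in the shelf
   below it, and those squares fill more than W - x1 of its width, since the
   square opening the next shelf (of side at most x1) did not fit.  Hence the
   squares placed so far have total area at least
   x1^2 + (W - x1) (t - x1), where t is the top of the current shelf.  An area
   budget of x1^2 + (W - x1) (H - x1) therefore keeps t <= H, so every square
   lands inside the container.  For W = H = 1 the budget is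
   x1^2 + (1 - x1)^2 = 1/2 + 2 (x1 - 1/2)^2. *)

Section ShelfPackingByArea.
Variables (R : realFieldType) (W H x1 : R).

Definition fits_in_container (pq : (R * R) * R) : bool :=
  let: (p, x) := pq in [&& 0 <= p.1, p.1 + x <= W, 0 <= p.2 & p.2 + x <= H].

Lemma shelf_packing_succeedsE (s : seq R) :
  shelf_packing_succeeds W H s = all fits_in_container (zip (shelf_positions W s) s).
Proof. by []. Qed.

Definition area_budget : R := x1 ^+ 2 + (W - x1) * (H - x1).

(* For the state (yb, h, u) of shelf_aux with m the last side placed: the squares
   of the current shelf after its opening one have sides >= m and total width
   u - h, whence the last term. *)
Definition packed_area_lower_bound (yb h u m : R) : R :=
  x1 ^+ 2 + (W - x1) * (yb + h - x1) + m * (u - h).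

Lemma packed_area_lower_bound_same_shelf (yb : R) {h u m x : R} :
  h <= u -> x <= m ->
  packed_area_lower_bound yb h (u + x) x <= packed_area_lower_bound yb h u m + x ^+ 2.
Proof.
move=> hu xm; rewrite /packed_area_lower_bound.
have : 0 <= (m - x) * (u - h) by apply: mulr_ge0; lra.
lra.
Qed.

Lemma packed_area_lower_bound_new_shelf (yb : R) {h u m x : R} :
  0 <= x -> h <= x1 -> h <= u -> x <= m -> W < u + x ->
  packed_area_lower_bound (yb + h) x x x <= packed_area_lower_bound yb h u m + x ^+ 2.
Proof.
move=> x0 hx1 hu xm overflow; rewrite /packed_area_lower_bound.
have : 0 <= (m - x) * (u - h) by apply: mulr_ge0; lra.
(* the overflow u + x > W and h <= x1 give x + (u - h) >= W - x1 *)
have : 0 <= x * (x + u - h - (W - x1)) by apply: mulr_ge0; lra.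
lra.
Qed.

Lemma shelf_top_le_height {yb h u m : R} :
  x1 < W -> 0 <= m -> h <= u ->
  packed_area_lower_bound yb h u m <= area_budget -> yb + h <= H.
Proof.
rewrite /packed_area_lower_bound /area_budget => x1W m0 hu bound.
have slack : 0 <= m * (u - h) by apply: mulr_ge0; lra.
have W_x1 : 0 < W - x1 by lra.
rewrite -(ler_pM2l W_x1); lra.
Qed.

Lemma shelf_aux_fits (s : seq R) (yb h u m : R) :
  x1 < W -> 0 <= yb -> 0 <= m -> m <= h -> h <= x1 -> h <= u -> u <= W ->
  path >=%R m s -> all (fun x => 0 <= x) s ->
  packed_area_lower_bound yb h u m + \sum_(x <- s) x ^+ 2 <= area_budget ->
  all fits_in_container (zip (shelf_aux W yb h u s) s).
Proof.
elim: s yb h u m => [|x s IH] yb h u m //= x1W yb0 m0 mh hx1 hu uW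
  /andP[xm sorted_s] /andP[x0 nonneg_s].
rewrite big_cons => budget.
have sum_ge0 : 0 <= \sum_(y <- s) y ^+ 2 by apply: sumr_ge0 => y _; apply: sqr_ge0.
have sqr_x_ge0 := sqr_ge0 x.
have top_le : yb + h <= H.
  by apply: (shelf_top_le_height x1W m0 hu); lra.
case: leP => [fits_row | overflow] /=.
- have step := packed_area_lower_bound_same_shelf yb hu xm.
  apply/andP; split; first by apply/and4P; split => //; lra.
  by apply: (IH _ _ _ x) => //; lra.
- have step := packed_area_lower_bound_new_shelf yb x0 hx1 hu xm overflow.
  have new_top : yb + h + x <= H.
    by apply: (shelf_top_le_height (u := x) (m := x) x1W) => //; lra.
  apply/andP; split; first by apply/and4P; split => //=; lra.
  by apply: (IH _ _ _ x) => //; lra.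
Qed.

Theorem shelf_packing_succeeds_within_area_budget (xs : seq R) :
  sorted >=%R (x1 :: xs) -> all (fun x => 0 <= x) (x1 :: xs) -> x1 < W ->
  \sum_(x <- x1 :: xs) x ^+ 2 <= area_budget ->
  shelf_packing_succeeds W H (x1 :: xs).
Proof.
move=> /= sorted_xs /andP[x10 nonneg_xs] x1W; rewrite big_cons => budget.
have sum_ge0 : 0 <= \sum_(y <- xs) y ^+ 2 by apply: sumr_ge0 => y _; apply: sqr_ge0.
have start : packed_area_lower_bound 0 x1 x1 x1 = x1 ^+ 2.
  by rewrite /packed_area_lower_bound; lra.
have x1H : 0 + x1 <= H.
  by apply: (shelf_top_le_height (u := x1) (m := x1) x1W) => //; lra.
rewrite shelf_packing_succeedsE /=; apply/andP; split.
  by apply/and4P; split => //; lra.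
by apply: (shelf_aux_fits xs 0 x1 x1 x1) => //; lra.
Qed.

End ShelfPackingByArea.

Theorem lemma4 (R : realFieldType) (x1 : R) (xs : seq R) :
  sorted (>=%R) (x1 :: xs) ->
  all (fun x => 0 < x) (x1 :: xs) ->
  x1 < 1 / 2 ->
  \sum_(x <- x1 :: xs) x ^+ 2 <= 1 / 2 + 2 * (x1 - 1 / 2) ^+ 2 ->
  shelf_packing_succeeds 1 1 (x1 :: xs).
Proof.
move=> sorted_xs pos_xs x1_half area.
apply: shelf_packing_succeeds_within_area_budget => //.
- by apply: sub_all pos_xs => x /ltW.
- lra.
- by rewrite /area_budget; lra.
Qed.
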